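(* For a connected undirected unweighted graph $G=(V,E)$ with $N$ vertices, any $S_0\subseteq V$ and any $r>1$, we have $\mathsf{fp}_{r}^{\delta=1/2}(G,S_0)\ge|S_0|/N$.
   Context: Mixed $\delta$-updating on $G$: each vertex holds a mutant (fitness $r$) or wild-type (fitness $1$); $f_S(x)$ is the fitness at $x$ when $S$ is the mutant set. At each step, with probability $\delta$ a death-Birth step: choose $v$ uniformly to die, choose a neighbor $u$ of $v$ with probability proportional to $f_S(u)$, $u$ copies its type onto $v$; with probability $1-\delta$ a Birth-death step: choose $u$ with probability proportional to $f_S(u)$ among all vertices, choose a uniformly random neighbor $v$ of $u$, $u$ copies its type onto $v$. $\mathsf{fp}_r^\delta(G,S_0)$ is the probability all vertices eventually become mutant from initial mutant set $S_0$. *)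

From HB Require Import structures.
From mathcomp Require Import all_boot all_order all_algebra.
From mathcomp Require Import all_classical all_reals all_analysis.
Set Implicit Arguments. Unset Strict Implicit. Unset Printing Implicit Defensive.
Import Order.TTheory GRing.Theory Num.Theory.
Import numFieldNormedType.Exports.
Local Open Scope ring_scope.

Section MixedUpdating.
Variables (R : realType) (V : finType) (e : rel V).

Definition simple_graph := symmetric e /\ irreflexive e.
Definition connected_graph := forall x y : V, connect e x y.

(* fitness at x when S is the mutant set *)
Definition fitness (r : R) (S : {set V}) (x : V) : R := if x \in S then r else 1.

Definition update (S : {set V}) (u v : V) : {set V} :=
  if u \in S then v |: S else S :\ v.

Definition indic (b : bool) : R := if b then 1 else 0.

(* death-Birth step: v uniform dies, neighbour u chosen prop. to fitness.
   (If v has no neighbour -- only possible when N = 1 -- nothing happens.) *)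
Definition dB_prob (r : R) (S T : {set V}) : R :=
  \sum_(v : V) (#|V|%:R)^-1 *
    (if #|[set u | e v u]| == 0%N then indic (T == S)
     else \sum_(u : V | e v u)
            (fitness r S u / \sum_(w : V | e v w) fitness r S w)
            * indic (T == update S u v)).

(* Birth-death step: u chosen prop. to fitness among all vertices,
   uniform neighbour v replaced. *)
Definition Bd_prob (r : R) (S T : {set V}) : R :=
  \sum_(u : V) (fitness r S u / \sum_(w : V) fitness r S w) *
    (if #|[set v | e u v]| == 0%N then indic (T == S)
     else \sum_(v : V | e u v)
            (#|[set w | e u w]|%:R)^-1 * indic (T == update S u v)).

Definition trans_prob (delta r : R) (S T : {set V}) : R :=
  delta * dB_prob r S T + (1 - delta) * Bd_prob r S T.

(* probability that the process started at S is in the all-mutant state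
   after n steps *)
Fixpoint fix_by (delta r : R) (n : nat) (S : {set V}) : R :=
  match n with
  | 0%N => indic (S == [set: V])
  | n'.+1 => \sum_(T : {set V}) trans_prob delta r S T * fix_by delta r n' T
  end.

(* fixation probability: probability of eventually reaching the all-mutant
   (absorbing) state = limit of the nondecreasing sequence above *)
Definition fp (delta r : R) (S0 : {set V}) : R :=
  limn (fun n => fix_by delta r n S0).

End MixedUpdating.

(* The number of mutants is a submartingale at delta = 1/2.  Along an edge from a
   mutant u to a resident v, each way for v to invade u is dominated by a way for u
   to invade v under the other update rule, because neighbourhood fitness sums lie
   between deg and r deg and the total fitness between N and r N.  Hence
   E[|S_n|/N] >= |S_0|/N.  On a connected graph, any state with a mutant reaches the
   all-mutant state within N steps with probability at least p^N, where
   p = 1/(2 N^2) bounds the probability of a single invasion along a boundary edge.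
   So the probability of not being absorbed after m N steps is at most
   (1 - p^N)^m, and since |S|/N <= [S = V] + [S is not absorbing],
   |S_0|/N - (1 - p^N)^m <= P(fixation by step m N) <= fp. *)

From Pilot Require Import Defs.
From HB Require Import structures.
From mathcomp Require Import all_boot all_order all_algebra.
From mathcomp Require Import all_classical all_reals all_analysis.
From mathcomp Require Import zify lra.
Set Implicit Arguments. Unset Strict Implicit. Unset Printing Implicit Defensive.
Import Order.TTheory GRing.Theory Num.Theory.
Import numFieldNormedType.Exports.
Local Open Scope ring_scope.

(* The classical-sets library shadows [indic] and [set0]. *)
Local Notation indic := Defs.indic.

Lemma indic_ge0 (R : realType) b : 0 <= indic R b.
Proof. by case: b; rewrite /indic. Qed.

Lemma indic_le1 (R : realType) b : indic R b <= 1.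
Proof. by case: b; rewrite /indic. Qed.

Lemma inv_le_div (R : numFieldType) (x y c : R) :
  0 < x -> 0 < y -> y <= c * x -> x^-1 <= c / y.
Proof. by move=> x_gt0 y_gt0 yx; rewrite ler_pdivlMr // mulrC ler_pdivrMr. Qed.

Lemma connect_boundary_edge (T : finType) (e : rel T) (A : {pred T}) x y :
  connect e x y -> x \in A -> y \notin A ->
  exists u v, [/\ u \in A, v \notin A & e u v].
Proof.
move=> /connectP[p]; elim: p x => [|z p IHp] x /=; first by move=> _ -> ->.
move=> /andP[exz pz] yE xA yA.
have [zA | zA] := boolP (z \in A); first exact: IHp pz yE zA yA.
by exists x, z.
Qed.

Lemma sumr_sym_ge0 (R : numDomainType) (I : finType) (H : I -> I -> R) :
  (forall i j, 0 <= H i j + H j i) -> 0 <= \sum_i \sum_j H i j.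
Proof.
move=> Hsym; rewrite -(@pmulrn_lge0 _ _ 2) // mulr2n.
rewrite [X in _ + X]exchange_big -big_split /=.
by apply: sumr_ge0 => i _; rewrite -big_split; apply: sumr_ge0 => j _ /=.
Qed.

Lemma sum_indic_eq (R : realType) (T : finType) (t0 : T) (g : T -> R) :
  \sum_t indic R (t == t0) * g t = g t0.
Proof.
rewrite (bigD1 t0) //= /indic eqxx mul1r big1 ?addr0 // => t /negbTE ->.
by rewrite mul0r.
Qed.

Lemma limn_ge_geometric (R : realType) (u : R ^nat) (a q : R) (k : nat) :
  nondecreasing_seq u -> cvgn u -> 0 <= q < 1 ->
  (forall m, a - q ^+ m <= u (m * k)%N) -> a <= limn u.
Proof.
move=> u_nd u_cvg /andP[q_ge0 q_lt1] u_ge.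
have qm_cvg : ((fun m => a - q ^+ m) @ \oo --> a - 0)%classic.
  by apply: cvgB; [exact: cvg_cst | apply: cvg_expr; rewrite ger0_norm].
rewrite -(subr0 a) -(cvg_lim _ qm_cvg) //; apply: limr_le; first exact: cvgP qm_cvg.
by apply: nearW => m; apply: le_trans (u_ge m) (nondecreasing_cvgn_le u_nd u_cvg _).
Qed.

Lemma sum_indic_mixture (R : realType) (I T : finType) (a : I -> R) (stay : pred I)
    (p : I -> pred I) (b : I -> I -> R) (f : I -> I -> T) (t0 : T) (g : T -> R) :
  \sum_t (\sum_i a i * (if stay i then indic R (t == t0)
                        else \sum_(j | p i j) b i j * indic R (t == f i j))) * g t
  = \sum_i a i * (if stay i then g t0 else \sum_(j | p i j) b i j * g (f i j)).
Proof.
under eq_bigr do rewrite mulr_suml.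
rewrite exchange_big; apply: eq_bigr => i _ /=.
under eq_bigr do rewrite -mulrA.
rewrite -mulr_sumr; congr (_ * _); case: (stay i); first exact: sum_indic_eq.
rewrite [LHS](eq_bigr _ (fun t _ => mulr_suml _ _ _ _)) exchange_big /=.
apply: eq_bigr => j _.
by under eq_bigr do rewrite -mulrA; rewrite -mulr_sumr sum_indic_eq.
Qed.

Section FiniteMarkovChain.
Variables (R : realType) (T : finType) (P : T -> T -> R).
Hypotheses (P_ge0 : forall s t, 0 <= P s t) (P_sum1 : forall s, \sum_t P s t = 1).

Definition expect (g : T -> R) (s : T) : R := \sum_t P s t * g t.

Lemma expect_indic t0 s : expect (fun t => indic R (t == t0)) s = P s t0.
Proof. by rewrite /expect; under eq_bigr do rewrite mulrC; exact: sum_indic_eq. Qed.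

Lemma expect_le g h s : (forall t, g t <= h t) -> expect g s <= expect h s.
Proof. by move=> gh; apply: ler_sum => t _; apply: ler_wpM2l. Qed.

Lemma expect_ge0 g s : (forall t, 0 <= g t) -> 0 <= expect g s.
Proof. by move=> g_ge0; apply: sumr_ge0 => t _; apply: mulr_ge0. Qed.

Lemma expectD g h : expect (g \+ h) = expect g \+ expect h.
Proof.
by apply/funext => s; rewrite /expect /= -big_split; apply: eq_bigr => t; rewrite mulrDr.
Qed.

Lemma expectZ a g : expect (fun t => a * g t) = fun s => a * expect g s.
Proof.
by apply/funext => s; rewrite /expect mulr_sumr; apply: eq_bigr => t; rewrite mulrCA.
Qed.

Lemma expect_cst c : expect (fun _ => c) = fun _ => c.
Proof. by apply/funext => s; rewrite /expect -mulr_suml P_sum1 mul1r. Qed.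

Lemma expect_absorbing g s : P s s = 1 -> expect g s = g s.
Proof.
move=> Pss; have : \sum_(t | t != s) P s t = 0.
  by have := P_sum1 s; rewrite (bigD1 s) //= Pss; lra.
move=> /psumr_eq0P Pst0.
rewrite /expect (bigD1 s) //= Pss mul1r big1 ?addr0 // => t ts.
by rewrite Pst0 ?mul0r.
Qed.

Lemma iter_expect_le n g h s :
  (forall t, g t <= h t) -> iter n expect g s <= iter n expect h s.
Proof. by move=> gh; elim: n s => [|n IHn] s //=; apply: expect_le. Qed.

Lemma iter_expect_ge0 n g s : (forall t, 0 <= g t) -> 0 <= iter n expect g s.
Proof. by move=> g_ge0; elim: n s => [|n IHn] s //=; apply: expect_ge0. Qed.

Lemma iter_expectD n g h : iter n expect (g \+ h) = iter n expect g \+ iter n expect h.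
Proof. by elim: n => //= n ->; rewrite expectD. Qed.

Lemma iter_expectZ n a g :
  iter n expect (fun t => a * g t) = fun s => a * iter n expect g s.
Proof. by elim: n => //= n ->; rewrite expectZ. Qed.

Lemma iter_expect_cst n c : iter n expect (fun _ => c) = fun _ => c.
Proof. by elim: n => //= n ->; rewrite expect_cst. Qed.

Lemma iter_expect_absorbing n g s : P s s = 1 -> iter n expect g s = g s.
Proof. by move=> Pss; elim: n => //= n IHn; rewrite expect_absorbing. Qed.

Lemma subharmonic_le_iter_expect n g s :
  (forall t, g t <= expect g t) -> g s <= iter n expect g s.
Proof.
move=> g_sub; elim: n s => [|n IHn] s //; rewrite iterSr.
exact: le_trans (IHn s) (iter_expect_le n s g_sub).
Qed.

Lemma iter_expect_geometric k q g m s : 0 <= q -> (forall t, g t <= 1) ->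
  (forall t, iter k expect g t <= q * g t) -> iter (m * k) expect g s <= q ^+ m.
Proof.
move=> q_ge0 g_le1 g_decay; elim: m s => [|m IHm] s; first by rewrite mul0n expr0.
rewrite mulSnr iterD exprS.
apply: (le_trans (iter_expect_le (m * k) s g_decay)).
by rewrite iter_expectZ ler_wpM2l.
Qed.

End FiniteMarkovChain.

Section MixedUpdatingHalf.
Variables (R : realType) (V : finType) (e : rel V) (r : R).
Hypotheses (e_sym : symmetric e) (r_gt1 : 1 < r) (V_gt0 : (0 < #|V|)%N).

Local Notation N := (#|V|%:R : R).
Local Notation deg v := #|[set u | e v u]|.
Local Notation fit S x := (@fitness R V r S x).
Local Notation nbr_fit S v := (\sum_(w | e v w) @fitness R V r S w).
Local Notation tot_fit S := (\sum_w @fitness R V r S w).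
Local Notation P := (trans_prob e (1 / 2) r).
Local Notation E := (expect P).

Lemma fitness_ge1 S x : 1 <= fit S x.
Proof. by rewrite /fitness; case: ifP => // _; apply: ltW. Qed.

Lemma fitness_le S x : fit S x <= r.
Proof. by rewrite /fitness; case: ifP => // _; apply: ltW. Qed.

Lemma fitness_gt0 S x : 0 < fit S x.
Proof. exact: lt_le_trans ltr01 (fitness_ge1 S x). Qed.

Lemma sum_nbr_cst v (c : R) : \sum_(u | e v u) c = c * (deg v)%:R.
Proof.
by rewrite mulr_natr -sumr_const; apply: eq_bigl => u; rewrite inE.
Qed.

Lemma sum_vertices_cst (c : R) : \sum_(u : V) c = c * N.
Proof. by rewrite sumr_const mulr_natr. Qed.

Lemma nbr_fit_ge S v : (deg v)%:R <= nbr_fit S v.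
Proof.
by rewrite -[leLHS]mul1r -sum_nbr_cst; apply: ler_sum => u _; apply: fitness_ge1.
Qed.

Lemma nbr_fit_le S v : nbr_fit S v <= r * (deg v)%:R.
Proof. by rewrite -sum_nbr_cst; apply: ler_sum => u _; apply: fitness_le. Qed.

Lemma tot_fit_ge S : N <= tot_fit S.
Proof.
by rewrite -[leLHS]mul1r -sum_vertices_cst; apply: ler_sum => u _; apply: fitness_ge1.
Qed.

Lemma tot_fit_le S : tot_fit S <= r * N.
Proof. by rewrite -sum_vertices_cst; apply: ler_sum => u _; apply: fitness_le. Qed.

Lemma N_gt0 : 0 < N.
Proof. by rewrite ltr0n. Qed.

Lemma tot_fit_gt0 S : 0 < tot_fit S.
Proof. exact: lt_le_trans N_gt0 (tot_fit_ge S). Qed.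

Lemma deg_gt0 u v : e u v -> (0 < deg u)%N.
Proof. by move=> euv; apply/card_gt0P; exists v; rewrite inE. Qed.

Lemma nbr_fit_gt0 S v : deg v != 0%N -> 0 < nbr_fit S v.
Proof. by move=> dv; apply: lt_le_trans (nbr_fit_ge S v); rewrite ltr0n lt0n. Qed.

Lemma deg_le u : (deg u)%:R <= N.
Proof. by rewrite ler_nat max_card. Qed.

Definition dB_expect (g : {set V} -> R) S : R :=
  \sum_v N^-1 * (if deg v == 0%N then g S
                 else \sum_(u | e v u) fit S u / nbr_fit S v * g (update S u v)).

Definition Bd_expect (g : {set V} -> R) S : R :=
  \sum_u fit S u / tot_fit S * (if deg u == 0%N then g S
                 else \sum_(v | e u v) (deg u)%:R^-1 * g (update S u v)).

Lemma expect_trans g S : E g S = 2^-1 * dB_expect g S + 2^-1 * Bd_expect g S.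
Proof.
rewrite /expect /trans_prob.
under eq_bigr do rewrite mulrDl -!mulrA.
rewrite big_split /= -!mulr_sumr /dB_prob /Bd_prob !sum_indic_mixture.
rewrite /dB_expect /Bd_expect; lra.
Qed.

Lemma dB_expect_invariant g S :
  (forall u v, g (update S u v) = g S) -> dB_expect g S = g S.
Proof.
move=> g_inv; rewrite /dB_expect.
under eq_bigr => v _.
  rewrite (_ : (if _ then _ else _) = g S); last first.
    case: eqP => // /eqP dv.
    under eq_bigr do rewrite g_inv.
    by rewrite -mulr_suml -mulr_suml divff ?mul1r // gt_eqF // nbr_fit_gt0.
  over.
by rewrite sum_vertices_cst mulrAC mulVf ?mul1r // gt_eqF // N_gt0.
Qed.

Lemma Bd_expect_invariant g S :
  (forall u v, g (update S u v) = g S) -> Bd_expect g S = g S.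
Proof.
move=> g_inv; rewrite /Bd_expect.
under eq_bigr => u _.
  rewrite (_ : (if _ then _ else _) = g S); last first.
    case: eqP => // /eqP du.
    under eq_bigr do rewrite g_inv.
    by rewrite sum_nbr_cst mulrAC mulVf ?mul1r // pnatr_eq0.
  over.
by rewrite -mulr_suml -mulr_suml divff ?mul1r // gt_eqF // tot_fit_gt0.
Qed.

Lemma expect_update_invariant g S : (forall u v, g (update S u v) = g S) -> E g S = g S.
Proof.
by move=> g_inv; rewrite expect_trans dB_expect_invariant // Bd_expect_invariant //; lra.
Qed.

Lemma trans_prob_sum1 S : \sum_T P S T = 1.
Proof.
have := @expect_update_invariant (fun _ => 1) S (fun _ _ => erefl).
by rewrite /expect; under eq_bigr do rewrite mulr1.
Qed.

Lemma trans_prob_ge0 S T : 0 <= P S T.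
Proof.
have fit_ge0 x : 0 <= fit S x := ltW (fitness_gt0 S x).
have half_ge0 : 0 <= 1 / 2 :> R by rewrite mul1r invr_ge0 ler0n.
rewrite /trans_prob /dB_prob /Bd_prob (_ : 1 - 1 / 2 = 1 / 2 :> R); last by lra.
apply: addr_ge0; apply: mulr_ge0 => //; apply: sumr_ge0 => x _.
- apply: mulr_ge0; first by rewrite invr_ge0 ler0n.
  case: ifP => _; first exact: indic_ge0.
  apply: sumr_ge0 => y _; apply: mulr_ge0; last exact: indic_ge0.
  by apply: divr_ge0 => //; apply: sumr_ge0.
- apply: mulr_ge0; first by apply: divr_ge0 => //; apply: sumr_ge0.
  case: ifP => _; first exact: indic_ge0.
  apply: sumr_ge0 => y _; apply: mulr_ge0; last exact: indic_ge0.
  by rewrite invr_ge0 ler0n.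
Qed.

Lemma trans_prob_stay S : (forall u v, update S u v = S) -> P S S = 1.
Proof.
move=> S_fixed; rewrite -expect_indic expect_update_invariant => [|u v].
  by rewrite /indic eqxx.
by rewrite S_fixed.
Qed.

Lemma trans_prob_set0 : P finset.set0 finset.set0 = 1.
Proof. by apply: trans_prob_stay => u v; rewrite /update inE finset.set0D. Qed.

Lemma trans_prob_setT : P [set: V] [set: V] = 1.
Proof. by apply: trans_prob_stay => u v; rewrite /update inE finset.setUT. Qed.

(* Twice the probability that [u] copies its type onto [v] in one step: death-Birth
   kills [v] and picks [u], or Birth-death picks [u] and then [v]. *)
Definition copy_rate S u v : R :=
  N^-1 * (fit S u / nbr_fit S v) + fit S u / tot_fit S * (deg u)%:R^-1.

Lemma copy_rate_ge0 S u v : 0 <= copy_rate S u v.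
Proof.
have fit_ge0 x : 0 <= fit S x by exact: ltW (fitness_gt0 S x).
apply: addr_ge0; apply: mulr_ge0; rewrite ?invr_ge0 ?ler0n //.
  by apply: divr_ge0 => //; apply: sumr_ge0.
by apply: divr_ge0 => //; exact: ltW (tot_fit_gt0 S).
Qed.

Lemma sum_nbr_deg0 v (F : V -> R) :
  (if deg v == 0%N then 0 else \sum_(u | e v u) F u) = \sum_(u | e v u) F u.
Proof.
case: eqP => // /eqP; rewrite cards_eq0 => /eqP v_isolated.
by rewrite big_pred0 // => u; move/setP/(_ u): v_isolated; rewrite !inE.
Qed.

Lemma sum_nbr_exchange (F : V -> V -> R) :
  \sum_v \sum_(u | e v u) F u v = \sum_u \sum_(v | e u v) F u v.
Proof.
rewrite (exchange_big_dep predT) //=; apply: eq_bigr => u _.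
by apply: eq_bigl => v; rewrite e_sym.
Qed.

Lemma expect_centered g S : g S = 0 ->
  E g S = 2^-1 * \sum_u \sum_(v | e u v) copy_rate S u v * g (update S u v).
Proof.
move=> gS0; rewrite expect_trans /dB_expect /Bd_expect gS0.
under eq_bigr do rewrite sum_nbr_deg0 mulr_sumr.
under [X in _ + _ * X]eq_bigr do rewrite sum_nbr_deg0 mulr_sumr.
rewrite sum_nbr_exchange -mulrDr -big_split; congr (_ * _); apply: eq_bigr => u _ /=.
by rewrite -big_split; apply: eq_bigr => v _; rewrite /copy_rate mulrDl !mulrA.
Qed.

Lemma card_update (S : {set V}) (u v : V) :
  #|update S u v|%:R = #|S|%:R + (u \in S)%:R - (v \in S)%:R :> R.
Proof.
rewrite /update; case: (u \in S) => /=.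
  by rewrite cardsU1 natrD; case: (v \in S) => /=; lra.
by rewrite [in RHS](cardsD1 v S) natrD; case: (v \in S) => /=; lra.
Qed.

Lemma copy_rate_drift (S : {set V}) u v : u \in S -> v \notin S -> e u v ->
  copy_rate S v u <= copy_rate S u v.
Proof.
move=> uS vS euv; have evu : e v u by rewrite e_sym.
have du_gt0 : 0 < (deg u)%:R :> R by rewrite ltr0n (deg_gt0 euv).
have dv_gt0 : 0 < (deg v)%:R :> R by rewrite ltr0n (deg_gt0 evu).
have nu_gt0 : 0 < nbr_fit S u by rewrite nbr_fit_gt0 // -lt0n (deg_gt0 euv).
have nv_gt0 : 0 < nbr_fit S v by rewrite nbr_fit_gt0 // -lt0n (deg_gt0 evu).
have N_ge0 : 0 <= N^-1 by rewrite invr_ge0 ltW ?N_gt0.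
rewrite /copy_rate /fitness uS (negbTE vS) !mul1r.
(* Each losing transition is dominated by a winning transition of the other rule,
   through [N <= tot_fit S <= r N] and [deg w <= nbr_fit S w <= r deg w]. *)
have dB_loss : N^-1 * (nbr_fit S u)^-1 <= r / tot_fit S * (deg u)%:R^-1.
  apply: (@le_trans _ _ (N^-1 * (deg u)%:R^-1)).
    by apply: ler_wpM2l => //; rewrite lef_pV2 ?posrE // nbr_fit_ge.
  apply: ler_wpM2r; first by rewrite invr_ge0 ltW.
  by apply: inv_le_div; rewrite ?N_gt0 ?tot_fit_gt0 ?tot_fit_le.
have Bd_loss : (tot_fit S)^-1 * (deg v)%:R^-1 <= N^-1 * (r / nbr_fit S v).
  apply: (@le_trans _ _ (N^-1 * (deg v)%:R^-1)).
    apply: ler_wpM2r; first by rewrite invr_ge0 ltW.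
    by rewrite lef_pV2 ?posrE ?N_gt0 ?tot_fit_gt0 // tot_fit_ge.
  by apply: ler_wpM2l => //; apply: inv_le_div; rewrite ?nbr_fit_le.
lra.
Qed.

Lemma card_submartingale (S : {set V}) : #|S|%:R <= E (fun T => #|T|%:R) S.
Proof.
pose g (T : {set V}) : R := #|T|%:R - #|S|%:R.
have -> : (fun T : {set V} => #|T|%:R) = g \+ (fun _ => #|S|%:R).
  by apply/funext => T; rewrite /g /= subrK.
rewrite expectD (expect_cst trans_prob_sum1) /= -[leLHS]add0r lerD2r.
rewrite expect_centered /g ?subrr // mulr_ge0 ?invr_ge0 ?ler0n //.
under eq_bigr do rewrite big_mkcond.
(* The two orientations of an edge contribute
   [(copy_rate S u v - copy_rate S v u) * ((u \in S)%:R - (v \in S)%:R)]. *)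
apply: sumr_sym_ge0 => u v /=; rewrite (e_sym v u).
case: ifP => euv; last by rewrite addr0.
rewrite !card_update.
case uS: (u \in S); case vS: (v \in S); rewrite /= ?mulr1n ?mulr0n.
- lra.
- by have := copy_rate_drift uS (negbT vS) euv; lra.
- by have := copy_rate_drift vS (negbT uS) (etrans (e_sym v u) euv); lra.
- lra.
Qed.

Lemma copy_rate_ge (S : {set V}) u v : u \in S -> e u v ->
  N^-1 * N^-1 <= copy_rate S u v.
Proof.
move=> uS euv; have N_ge0 : 0 <= N^-1 by rewrite invr_ge0 ltW ?N_gt0.
have du_gt0 : 0 < (deg u)%:R :> R by rewrite ltr0n (deg_gt0 euv).
have fit_u : fit S u = r by rewrite /fitness uS.
rewrite /copy_rate fit_u; apply: ler_wpDl.
  apply: mulr_ge0 => //; apply: divr_ge0; first by rewrite ltW // (lt_trans ltr01).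
  by apply: sumr_ge0 => w _; exact: ltW (fitness_gt0 S w).
apply: ler_pM => //.
  by apply: inv_le_div; rewrite ?N_gt0 ?tot_fit_gt0 ?tot_fit_le.
by rewrite lef_pV2 ?posrE ?N_gt0 // deg_le.
Qed.

Lemma trans_prob_invade (S : {set V}) u v : u \in S -> v \notin S -> e u v ->
  2^-1 * (N^-1 * N^-1) <= P S (v |: S).
Proof.
move=> uS vS euv.
have S_new : (S == v |: S) = false.
  by apply/negbTE; apply: contra vS => /eqP ->; rewrite setU11.
rewrite -expect_indic expect_centered; last by rewrite /indic S_new.
apply: ler_wpM2l; first by rewrite invr_ge0 ler0n.
have term_ge0 u' v' : 0 <= copy_rate S u' v' * indic R (update S u' v' == v |: S).
  by apply: mulr_ge0; [exact: copy_rate_ge0 | exact: indic_ge0].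
rewrite (bigD1 u) //= (bigD1 v) //=.
have -> : indic R (update S u v == v |: S) = 1 by rewrite /update uS /indic eqxx.
rewrite mulr1 -addrA.
apply: ler_wpDr; last exact: copy_rate_ge uS euv.
by apply: addr_ge0; apply: sumr_ge0 => *; [exact: term_ge0 | apply: sumr_ge0 => *].
Qed.

Local Notation full T := (indic R (T == [set: V])).

Lemma fix_by_iter n S : fix_by e (1 / 2) r n S = iter n E (fun T => full T) S.
Proof. by elim: n S => //= n IHn S; apply: eq_bigr => T _; rewrite IHn. Qed.

Lemma fix_by_ge0 n S : 0 <= fix_by e (1 / 2) r n S.
Proof.
by rewrite fix_by_iter; apply: (iter_expect_ge0 trans_prob_ge0) => T; apply: indic_ge0.
Qed.

Lemma fix_by_le1 n S : fix_by e (1 / 2) r n S <= 1.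
Proof.
rewrite fix_by_iter -[leRHS](congr1 (fun f => f S) (iter_expect_cst trans_prob_sum1 n 1)).
by apply: (iter_expect_le trans_prob_ge0) => T; apply: indic_le1.
Qed.

Lemma fix_by_nondecreasing S : nondecreasing_seq (fun n => fix_by e (1 / 2) r n S).
Proof.
apply/nondecreasing_seqP => n; rewrite !fix_by_iter iterSr.
apply: (iter_expect_le trans_prob_ge0) => T.
have [->|_] := eqVneq T [set: V].
  by rewrite (expect_absorbing trans_prob_ge0 trans_prob_sum1 _ trans_prob_setT) eqxx.
by rewrite /indic /=; apply: (expect_ge0 trans_prob_ge0) => T'; apply: indic_ge0.
Qed.

Local Notation p := (2^-1 * (N^-1 * N^-1) : R).

Lemma p_gt0 : 0 < p.
Proof. by rewrite !mulr_gt0 ?invr_gt0 ?N_gt0. Qed.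

Lemma p_le1 : p <= 1.
Proof.
have N_inv_le1 : N^-1 <= 1 by rewrite invf_le1 ?N_gt0 // ler1n.
have : 0 <= N^-1 by rewrite invr_ge0 ltW ?N_gt0.
nra.
Qed.

Hypothesis e_conn : forall x y, connect e x y.

Lemma fix_by_card_setC_ge n S : S != finset.set0 -> #|~: S| = n ->
  p ^+ n <= fix_by e (1 / 2) r n S.
Proof.
elim: n S => [|n IHn] S S_nonempty S_card.
  suff -> : S = [set: V] by rewrite /= eqxx expr0.
  apply/setP => x; rewrite inE; apply: contraT => xS.
  have : (0 < #|~: S|)%N by apply/card_gt0P; exists x; rewrite inE.
  by rewrite S_card.
have [y] : exists y, y \in ~: S by apply/card_gt0P; rewrite S_card.
have /finset.set0Pn[x xS] := S_nonempty; rewrite inE => yS.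
have [u [v [uS vS euv]]] := connect_boundary_edge (e_conn x y) xS yS.
have vS_card : #|~: (v |: S)| = n.
  by have := cardsC S; have := cardsC (v |: S); rewrite cardsU1 vS S_card /=; lia.
have vS_nonempty : v |: S != finset.set0 by apply/finset.set0Pn; exists v; rewrite setU11.
rewrite exprS /= (bigD1 (v |: S)) //=; apply: ler_wpDr.
  by apply: sumr_ge0 => T _; apply: mulr_ge0; [exact: trans_prob_ge0 | exact: fix_by_ge0].
apply: ler_pM; [exact: ltW p_gt0 | exact: exprn_ge0 (ltW p_gt0) | |exact: IHn].
exact: trans_prob_invade uS vS euv.
Qed.

Lemma fix_by_ge_nonempty S :
  S != finset.set0 -> p ^+ #|V| <= fix_by e (1 / 2) r #|V| S.
Proof.
move=> S_nonempty; have S_le := max_card (mem (~: S)).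
apply: le_trans (ler_wiXn2l (ltW p_gt0) p_le1 S_le) _.
apply: le_trans (fix_by_card_setC_ge S_nonempty (erefl _)) _.
exact: fix_by_nondecreasing.
Qed.

Definition transient (T : {set V}) : R :=
  indic R ((T != finset.set0) && (T != [set: V])).

Lemma transient_decay S :
  iter #|V| E transient S <= (1 - p ^+ #|V|) * transient S.
Proof.
have [-> | S_nonempty] := eqVneq S finset.set0.
  rewrite (iter_expect_absorbing trans_prob_ge0 trans_prob_sum1 _ _ trans_prob_set0).
  by rewrite /transient eqxx mulr0.
have [-> | S_not_full] := eqVneq S [set: V].
  rewrite (iter_expect_absorbing trans_prob_ge0 trans_prob_sum1 _ _ trans_prob_setT).
  by rewrite /transient eqxx andbF mulr0.
rewrite {2}/transient S_nonempty S_not_full mulr1.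
have : iter #|V| E (transient \+ (fun T => full T)) S <= 1.
  rewrite -[leRHS](congr1 (fun f => f S) (iter_expect_cst trans_prob_sum1 #|V| 1)).
  apply: (iter_expect_le trans_prob_ge0) => T /=; rewrite /transient /indic.
  by case: (T == [set: V]); case: (T != finset.set0) => /=; lra.
rewrite iter_expectD /= -fix_by_iter.
by have := fix_by_ge_nonempty S_nonempty; lra.
Qed.

Lemma card_le_full_transient (T : {set V}) : #|T|%:R / N <= full T + transient T.
Proof.
have frac_le1 : #|T|%:R / N <= 1.
  by rewrite ler_pdivrMr ?N_gt0 // mul1r ler_nat max_card.
rewrite /transient /indic.
have [->|_] := eqVneq T [set: V].
  by rewrite andbF cardsT divff ?gt_eqF ?N_gt0 // addr0.
have [->|_] := eqVneq T finset.set0; first by rewrite cards0 mul0r addr0.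
by rewrite add0r.
Qed.

Lemma fix_by_ge_card (S : {set V}) : exists2 q : R, 0 <= q < 1 &
  forall m, #|S|%:R / N - q ^+ m <= fix_by e (1 / 2) r (m * #|V|) S.
Proof.
have frac_sub (T : {set V}) : #|T|%:R / N <= E (fun T' => #|T'|%:R / N) T.
  have -> : (fun T' : {set V} => #|T'|%:R / N) = (fun T' => N^-1 * #|T'|%:R).
    by apply/funext => T'; rewrite mulrC.
  rewrite expectZ mulrC; apply: ler_wpM2l; first by rewrite invr_ge0 ler0n.
  exact: card_submartingale.
have q_ge0 : 0 <= 1 - p ^+ #|V|.
  by rewrite subr_ge0; apply: exprn_ile1; [exact: ltW p_gt0 | exact: p_le1].
exists (1 - p ^+ #|V|); first by rewrite q_ge0 gtrBl exprn_gt0 ?p_gt0.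
move=> m; have := subharmonic_le_iter_expect trans_prob_ge0 (m * #|V|) S frac_sub.
have := iter_expect_geometric trans_prob_ge0 m S q_ge0 (fun T => indic_le1 _ _)
  transient_decay.
have := iter_expect_le trans_prob_ge0 (m * #|V|) S
  (h := (fun T => full T) \+ transient) card_le_full_transient.
rewrite iter_expectD /= -fix_by_iter; lra.
Qed.

End MixedUpdatingHalf.

Lemma fp_card0 (R : realType) (V : finType) (e : rel V) (delta r : R) S :
  #|V| = 0%N -> fp e delta r S = 0.
Proof.
move=> V0; have no_vertex (x : V) : False by have := card0_eq V0 x; rewrite !inE.
have eventually0 : (\forall n \near \oo, fix_by e delta r n S = 0)%classic.
  exists 1%N => // [[|n]] //= _.
  apply: big1 => T _; rewrite /trans_prob /dB_prob /Bd_prob.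
  by rewrite !big1 ?mulr0 ?addr0 ?mul0r // => x; case: (no_vertex x).
exact: lim_near_cst eventually0.
Qed.

Theorem mainTheorem14 (R : realType) (V : finType) (e : rel V)
    (Hsimple : simple_graph e) (Hconn : connected_graph e)
    (S0 : {set V}) (r : R) (Hr : 1 < r) :
  (#|S0|%:R / #|V|%:R : R) <= fp e (1 / 2) r S0.
Proof.
(* Without vertices the left-hand side is [_ / 0 = 0]. *)
have [V0 | V_gt0] := posnP #|V|; first by rewrite fp_card0 // V0 invr0 mulr0.
have [e_sym _] := Hsimple.
have fix_nd := fix_by_nondecreasing e Hr V_gt0 S0.
have [q q_01 fix_ge] := fix_by_ge_card e_sym Hr V_gt0 Hconn S0.
have fix_cvg : cvgn (fun n => fix_by e (1 / 2) r n S0).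
  apply: (nondecreasing_is_cvgn fix_nd).
  by exists 1 => _ [n _ <-]; exact: fix_by_le1.
exact: limn_ge_geometric fix_nd fix_cvg q_01 fix_ge.
Qed.
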